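(* Let $c$ be the ellipse $x^2/a_c^2+y^2/b_c^2=1$, $a_c>b_c>0$, $e$ a confocal ellipse exterior to $c$ with semiaxes $(a_e,b_e)$, and $P_1\dots P_N$ an $N$-periodic billiard in $e$ with caustic $c$ with $N$ even, where $P_i=(a_e\cos t_i,b_e\sin t_i)$ and the contact point of side $P_iP_{i+1}$ with $c$ is $Q_i=(a_c\cos t_i',b_c\sin t_i')$. Put $\mathbf t_c(t)=(-a_c\sin t,\,b_c\cos t)$ and $k_h(t)=-\Vert\mathbf t_c(t)\Vert^2$. Then (indices mod $N$), for all $i$: \begin{itemize} \item if $N=4n$: $\Vert\mathbf t_c(t_i)\Vert\,\Vert\mathbf t_c(t_{i+n})\Vert=\sqrt{k_h(t_i)k_h(t_{i+n})}=a_cb_c$ and $\Vert\mathbf t_c(t_i')\Vert\,\Vert\mathbf t_c(t_{i+n}')\Vert=\sqrt{k_h(t_i')k_h(t_{i+n}')}=a_cb_c$; \item if $N=4n+2$: $\Vert\mathbf t_c(t_i)\Vert\,\Vert\mathbf t_c(t_{i+n}')\Vert=\sqrt{k_h(t_i)k_h(t_{i+n}')}=a_cb_c$ and $\Vert\mathbf t_c(t_i')\Vert\,\Vert\mathbf t_c(t_{i+n+1})\Vert=\sqrt{k_h(t_i')k_h(t_{i+n+1})}=a_cb_c$. \end{itemize}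
   Context: Confocal ellipses: $e$ has $a_e^2=a_c^2+k_e$, $b_e^2=b_c^2+k_e$ with $k_e>0$. A billiard in $e$ with caustic $c$ is a sequence of points $P_1,P_2,\dots$ on $e$ such that each line $P_iP_{i+1}$ is tangent to $c$ and $P_{i-1}P_i$, $P_iP_{i+1}$ are the two tangents from $P_i$ to $c$; it is traversed counterclockwise and is $N$-periodic if $P_{i+N}=P_i$. *)

From Stdlib Require Import Reals.
Open Scope R_scope.

Definition ell_pt (a b s : R) : R * R := (a * cos s, b * sin s).

Definition on_tangent (a b s : R) (p : R * R) : Prop :=
  fst p * cos s / a + snd p * sin s / b = 1.

Definition cross (p q : R * R) : R := fst p * snd q - snd p * fst q.

Definition periodic_billiard (ac bc ae be : R) (N : nat) (t t' : nat -> R) : Prop :=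
  let P i := ell_pt ae be (t i) in
  let Q i := ell_pt ac bc (t' i) in
  (forall i, P i <> P (S i)) /\
  (forall i, on_tangent ac bc (t' i) (P i) /\ on_tangent ac bc (t' i) (P (S i))) /\
  (* P_{i-1}P_i and P_iP_{i+1} are the two (distinct) tangents from P_i *)
  (forall i, Q i <> Q (S i)) /\
  (* traversed counterclockwise (around the caustic, hence the origin) *)
  (forall i, 0 < cross (P i) (P (S i))) /\
  (0 < N)%nat /\
  (forall i, P (i + N)%nat = P i) /\
  (forall k, (0 < k < N)%nat -> exists i, P (i + k)%nat <> P i).

Definition tc_norm (a b s : R) : R := sqrt ((- a * sin s) ^ 2 + (b * cos s) ^ 2).

Definition kh (a b s : R) : R := - ((- a * sin s) ^ 2 + (b * cos s) ^ 2).

(* Dividing the tangency condition between the vertex (ae cos t, be sin t) and the contact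
   point (ac cos s, bc sin s) by ac bc gives [ell_pairing (ae/ac) (be/bc) t s = 1], which is
   symmetric in t and s.  So a single increasing lift [bounce] of a circle map, commuting with
   the translation by PI and advancing every point by less than PI, sends t_i to t'_i and t'_i
   to t_(i+1) modulo 2 PI.  The polar angle [tangent_angle] of t_c is a lift of the same kind
   whose square is the translation by PI; it maps tangency pairs to tangency pairs, hence
   commutes with [bounce], and ||t_c (tangent_angle x)|| ||t_c x|| = ac bc.  Periodicity makes
   the N-th power of [bounce o bounce] a translation by a multiple of 2 PI along the orbit;
   monotonicity and the minimality of N then force the (N/2)-th power of [bounce] to agree
   with [tangent_angle] up to a multiple of PI.  N/2 half-steps are n full steps when N = 4n,
   and n full steps plus one half-step when N = 4n + 2. *)

From Stdlib Require Import Reals Lra Psatz ZArith Lia.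
Open Scope R_scope.

Definition ell_pairing (a b x y : R) : R := a * cos x * cos y + b * sin x * sin y.

Definition ell_cross (a b x y : R) : R := a * cos x * sin y - b * sin x * cos y.

Definition ell_norm2 (a b x : R) : R := a ^ 2 * cos x ^ 2 + b ^ 2 * sin x ^ 2.

Definition ell_norm (a b x : R) : R := sqrt (ell_norm2 a b x).

(* The polar angle of (a cos x, b sin x), taken within PI/2 of x (for a, b > 0). *)
Definition ell_arg (a b x : R) : R :=
  x + atan ((b - a) * sin x * cos x / (a * cos x ^ 2 + b * sin x ^ 2)).

Definition same_dir (x y : R) : Prop := cos x = cos y /\ sin x = sin y.

Lemma same_dir_sym x y : same_dir x y -> same_dir y x.
Proof. intros [? ?]. now split. Qed.

Lemma same_dir_trans x y z : same_dir x y -> same_dir y z -> same_dir x z.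
Proof. intros [? ?] [? ?]. split; congruence. Qed.

Lemma cos2_sin2 x : cos x ^ 2 + sin x ^ 2 = 1.
Proof. pose proof (sin2_cos2 x) as H. unfold Rsqr in H. nra. Qed.

Lemma lt_cos2_sin2_comb p q r x : r < p -> r < q -> r < p * cos x ^ 2 + q * sin x ^ 2.
Proof.
  intros Hp Hq.
  replace r with (r * cos x ^ 2 + r * sin x ^ 2)
    by (rewrite <- Rmult_plus_distr_l, cos2_sin2; ring).
  pose proof (cos2_sin2 x). pose proof (pow2_ge_0 (cos x)). pose proof (pow2_ge_0 (sin x)).
  destruct (Rle_lt_dec (cos x ^ 2) (1 / 2)); nra.
Qed.

Lemma ell_pairing_sym a b x y : ell_pairing a b x y = ell_pairing a b y x.
Proof. unfold ell_pairing. ring. Qed.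

Lemma ell_pairing_opp a b x y : ell_pairing a b (- y) (- x) = ell_pairing a b x y.
Proof. unfold ell_pairing. rewrite !cos_neg, !sin_neg. ring. Qed.

Lemma ell_pairing_add_pi_r a b x y : ell_pairing a b x (y + PI) = - ell_pairing a b x y.
Proof. unfold ell_pairing. rewrite neg_cos, neg_sin. ring. Qed.

Lemma ell_norm2_same_dir a b x y : same_dir x y -> ell_norm2 a b x = ell_norm2 a b y.
Proof. intros [Hc Hs]. unfold ell_norm2. now rewrite Hc, Hs. Qed.

Lemma ell_norm2_add_pi a b x : ell_norm2 a b (x + PI) = ell_norm2 a b x.
Proof. unfold ell_norm2. rewrite neg_cos, neg_sin. ring. Qed.

Lemma ell_norm2_add_pi_mult a b n x : ell_norm2 a b (x + INR n * PI) = ell_norm2 a b x.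
Proof.
  induction n as [|n IH].
  - simpl. now rewrite Rmult_0_l, Rplus_0_r.
  - rewrite S_INR. replace (x + (INR n + 1) * PI) with (x + INR n * PI + PI) by ring.
    now rewrite ell_norm2_add_pi.
Qed.

Lemma ell_arg_add_pi a b x : ell_arg a b (x + PI) = ell_arg a b x + PI.
Proof.
  unfold ell_arg. rewrite neg_cos, neg_sin.
  replace ((b - a) * - sin x * - cos x / (a * (- cos x) ^ 2 + b * (- sin x) ^ 2))
    with ((b - a) * sin x * cos x / (a * cos x ^ 2 + b * sin x ^ 2)) by (f_equal; ring).
  ring.
Qed.

(* Lagrange's identity, and the coordinates of (cos y, sin y) in the orthogonal frame
   (a cos x, b sin x), (- b sin x, a cos x). *)
Lemma ell_cross_sq a b x y :
  ell_cross a b x y ^ 2 = ell_norm2 a b x - ell_pairing a b x y ^ 2.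
Proof.
  rewrite <- (Rmult_1_r (ell_norm2 a b x)), <- (cos2_sin2 y).
  unfold ell_pairing, ell_cross, ell_norm2. ring.
Qed.

Lemma cos_ell_frame a b x y :
  cos y * ell_norm2 a b x = ell_pairing a b x y * (a * cos x) - ell_cross a b x y * (b * sin x).
Proof.
  unfold ell_pairing, ell_cross, ell_norm2. ring.
Qed.

Lemma sin_ell_frame a b x y :
  sin y * ell_norm2 a b x = ell_pairing a b x y * (b * sin x) + ell_cross a b x y * (a * cos x).
Proof.
  unfold ell_pairing, ell_cross, ell_norm2. ring.
Qed.

Lemma ell_norm2_nonneg a b x : 0 <= ell_norm2 a b x.
Proof. unfold ell_norm2. nra. Qed.

Lemma ell_norm_sq a b x : ell_norm a b x ^ 2 = ell_norm2 a b x.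
Proof. unfold ell_norm. rewrite pow2_sqrt; auto using ell_norm2_nonneg. Qed.

Section EllipseAngle.

Variables a b : R.
Hypotheses (Ha : 0 < a) (Hb : 0 < b).

Lemma ell_weight_pos x : 0 < a * cos x ^ 2 + b * sin x ^ 2.
Proof. now apply lt_cos2_sin2_comb. Qed.

Lemma ell_norm2_pos x : 0 < ell_norm2 a b x.
Proof. apply lt_cos2_sin2_comb; nra. Qed.

Lemma ell_norm_pos x : 0 < ell_norm a b x.
Proof. apply sqrt_lt_R0, ell_norm2_pos. Qed.

Let sqrt_one_plus_slope x :
  sqrt (1 + ((b - a) * sin x * cos x / (a * cos x ^ 2 + b * sin x ^ 2))²)
  = ell_norm a b x / (a * cos x ^ 2 + b * sin x ^ 2).
Proof.
  pose proof (ell_weight_pos x). pose proof (ell_norm_pos x).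
  apply sqrt_lem_1.
  - pose proof (Rle_0_sqr ((b - a) * sin x * cos x / (a * cos x ^ 2 + b * sin x ^ 2))). lra.
  - apply Rlt_le, Rdiv_lt_0_compat; lra.
  - unfold Rsqr. field_simplify; [|lra|lra].
    rewrite ell_norm_sq. f_equal. unfold ell_norm2.
    rewrite <- (Rmult_1_r (a ^ 2 * cos x ^ 2 + _)), <- (cos2_sin2 x). ring.
Qed.

Lemma cos_ell_arg x : cos (ell_arg a b x) = a * cos x / ell_norm a b x.
Proof.
  pose proof (ell_weight_pos x). pose proof (ell_norm_pos x).
  unfold ell_arg. rewrite cos_plus, cos_atan, sin_atan, sqrt_one_plus_slope.
  transitivity (a * cos x * (cos x ^ 2 + sin x ^ 2) / ell_norm a b x).
  - field. lra.
  - now rewrite cos2_sin2, Rmult_1_r.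
Qed.

Lemma sin_ell_arg x : sin (ell_arg a b x) = b * sin x / ell_norm a b x.
Proof.
  pose proof (ell_weight_pos x). pose proof (ell_norm_pos x).
  unfold ell_arg. rewrite sin_plus, cos_atan, sin_atan, sqrt_one_plus_slope.
  transitivity (b * sin x * (cos x ^ 2 + sin x ^ 2) / ell_norm a b x).
  - field. lra.
  - now rewrite cos2_sin2, Rmult_1_r.
Qed.

Lemma ell_pairing_polar x y :
  ell_pairing a b x y = ell_norm a b x * cos (y - ell_arg a b x).
Proof.
  pose proof (ell_norm_pos x).
  rewrite cos_minus, cos_ell_arg, sin_ell_arg. unfold ell_pairing. field. lra.
Qed.

Lemma cos_ell_arg_sub x :
  cos (ell_arg a b x - x) = (a * cos x ^ 2 + b * sin x ^ 2) / ell_norm a b x.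
Proof.
  pose proof (ell_norm_pos x).
  rewrite cos_minus, cos_ell_arg, sin_ell_arg. field. lra.
Qed.

End EllipseAngle.

(* The first y > x with [ell_pairing a b x y = c]: the polar angle of (a cos x, b sin x),
   advanced by the angle whose cosine is c over the length of that vector. *)
Definition next_root (a b c x : R) : R := ell_arg a b x + acos (c / ell_norm a b x).

Section NextRoot.

Variables a b c : R.
Hypotheses (Hc : 0 <= c) (Hca : c < a) (Hcb : c < b).

Let Ha : 0 < a. Proof. lra. Qed.
Let Hb : 0 < b. Proof. lra. Qed.

Lemma ell_norm_gt x : c < ell_norm a b x.
Proof.
  pose proof (ell_norm_pos a b Ha Hb x).
  assert (c ^ 2 < ell_norm a b x ^ 2)
    by (rewrite ell_norm_sq; apply lt_cos2_sin2_comb; nra).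
  nra.
Qed.

Let ratio_bound x : 0 <= c / ell_norm a b x < 1.
Proof.
  pose proof (ell_norm_gt x). unfold Rdiv. split.
  - apply Rmult_le_pos; [lra|]. apply Rlt_le, Rinv_0_lt_compat. lra.
  - apply (Rmult_lt_reg_r (ell_norm a b x)); [lra|].
    rewrite Rmult_assoc, Rinv_l; lra.
Qed.

Let cos_offset x : cos (acos (c / ell_norm a b x)) = c / ell_norm a b x.
Proof. pose proof (ratio_bound x). apply cos_acos. lra. Qed.

Lemma next_root_offset_bound x : 0 < acos (c / ell_norm a b x) <= PI / 2.
Proof.
  pose proof (ratio_bound x) as Hr. pose proof (acos_bound_lt (c / ell_norm a b x)).
  split; [lra|].
  destruct (Rle_lt_dec (acos (c / ell_norm a b x)) (PI / 2)) as [|Hgt]; [assumption|].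
  pose proof (cos_lt_0 _ Hgt ltac:(lra)). rewrite cos_offset in *. lra.
Qed.

Lemma ell_arg_sub_lt x :
  - acos (c / ell_norm a b x) < ell_arg a b x - x < acos (c / ell_norm a b x).
Proof.
  set (d := ell_arg a b x - x). set (delta := acos (c / ell_norm a b x)).
  pose proof (next_root_offset_bound x) as Hdelta. fold delta in Hdelta.
  assert (Hd : - (PI / 2) < d < PI / 2).
  { unfold d, ell_arg. pose proof (atan_bound
      ((b - a) * sin x * cos x / (a * cos x ^ 2 + b * sin x ^ 2))). lra. }
  assert (Hcos : cos delta < cos d).
  { unfold d, delta. rewrite cos_offset, cos_ell_arg_sub by assumption.
    pose proof (ell_norm_pos a b Ha Hb x). unfold Rdiv.
    apply Rmult_lt_compat_r; [now apply Rinv_0_lt_compat|].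
    now apply lt_cos2_sin2_comb. }
  destruct (Rle_lt_dec 0 d).
  - apply cos_decreasing_0 in Hcos; lra.
  - rewrite <- (cos_neg d) in Hcos. apply cos_decreasing_0 in Hcos; lra.
Qed.

Lemma next_root_bounds x : x < next_root a b c x < x + PI.
Proof.
  pose proof (ell_arg_sub_lt x). pose proof (next_root_offset_bound x).
  unfold next_root. lra.
Qed.

Lemma ell_pairing_next_root x : ell_pairing a b x (next_root a b c x) = c.
Proof.
  pose proof (ell_norm_pos a b Ha Hb x).
  rewrite ell_pairing_polar by assumption. unfold next_root.
  replace (ell_arg a b x + _ - ell_arg a b x) with (acos (c / ell_norm a b x)) by ring.
  rewrite cos_offset. field. lra.
Qed.

Lemma next_root_add_pi x : next_root a b c (x + PI) = next_root a b c x + PI.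
Proof.
  unfold next_root, ell_norm. rewrite ell_arg_add_pi, ell_norm2_add_pi. ring.
Qed.

(* [pairing - c = r (cos (y - arg) - cos delta)], factored by [form2]. *)
Let ell_pairing_sub_factor x y :
  ell_pairing a b x y - c = ell_norm a b x *
    (-2 * sin ((y - next_root a b c x) / 2)
        * sin ((y - ell_arg a b x + acos (c / ell_norm a b x)) / 2)).
Proof.
  pose proof (ell_norm_pos a b Ha Hb x).
  rewrite ell_pairing_polar by assumption.
  transitivity (ell_norm a b x *
    (cos (y - ell_arg a b x) - cos (acos (c / ell_norm a b x)))).
  - rewrite cos_offset. field. lra.
  - rewrite form2.
    now replace (y - ell_arg a b x - acos (c / ell_norm a b x)) with (y - next_root a b c x)
      by (unfold next_root; ring).
Qed.

Let sin_factor_pos x y : x <= y <= x + PI ->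
  0 < sin ((y - ell_arg a b x + acos (c / ell_norm a b x)) / 2).
Proof.
  intros Hy. pose proof (ell_arg_sub_lt x). pose proof (next_root_offset_bound x).
  apply sin_gt_0; lra.
Qed.

Lemma ell_pairing_gt_before x y : x <= y < next_root a b c x -> c < ell_pairing a b x y.
Proof.
  intros Hy. pose proof (next_root_bounds x). pose proof (ell_arg_sub_lt x).
  pose proof (next_root_offset_bound x). pose proof (ell_norm_pos a b Ha Hb x).
  pose proof (sin_factor_pos x y ltac:(lra)).
  assert (sin ((y - next_root a b c x) / 2) < 0)
    by (apply sin_lt_0_var; unfold next_root in *; lra).
  assert (0 < ell_pairing a b x y - c); [|lra].
  rewrite ell_pairing_sub_factor. apply Rmult_lt_0_compat; nra.
Qed.

Lemma ell_pairing_lt_after x y : next_root a b c x < y <= x + PI -> ell_pairing a b x y < c.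
Proof.
  intros Hy. pose proof (next_root_bounds x). pose proof (ell_arg_sub_lt x).
  pose proof (next_root_offset_bound x). pose proof (ell_norm_pos a b Ha Hb x).
  pose proof (sin_factor_pos x y ltac:(lra)).
  assert (0 < sin ((y - next_root a b c x) / 2))
    by (apply sin_gt_0; unfold next_root in *; lra).
  assert (0 < - (ell_pairing a b x y - c)); [|lra].
  rewrite ell_pairing_sub_factor, Ropp_mult_distr_r. apply Rmult_lt_0_compat; nra.
Qed.

Lemma next_root_unique x y :
  x <= y <= x + PI -> ell_pairing a b x y = c -> y = next_root a b c x.
Proof.
  intros Hy Hroot.
  destruct (Rtotal_order y (next_root a b c x)) as [Hlt|[Heq|Hgt]]; [|assumption|].
  - pose proof (ell_pairing_gt_before x y ltac:(lra)). lra.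
  - pose proof (ell_pairing_lt_after x y ltac:(lra)). lra.
Qed.

(* Reflecting [(x, y)] to [(-y, -x)] preserves the pairing and swaps the roles of the two
   arguments, which turns a failure of monotonicity into two roots of one equation. *)
Lemma next_root_increasing x1 x2 : x1 < x2 -> next_root a b c x1 < next_root a b c x2.
Proof.
  intros Hx. pose proof (next_root_bounds x1). pose proof (next_root_bounds x2).
  destruct (Rle_lt_dec (x1 + PI) x2); [lra|].
  destruct (Rlt_or_le (next_root a b c x1) (next_root a b c x2)) as [|Hle]; [assumption|].
  set (y := next_root a b c x2) in *.
  assert (Hx1 : c <= ell_pairing a b x1 y).
  { destruct (Rle_lt_or_eq_dec _ _ Hle) as [Hlt|Heq].
    - apply Rlt_le, ell_pairing_gt_before. lra.
    - rewrite Heq, ell_pairing_next_root. lra. }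
  assert (Hrefl : - x2 = next_root a b c (- y)).
  { apply next_root_unique; [lra|]. rewrite ell_pairing_opp. apply ell_pairing_next_root. }
  pose proof (ell_pairing_lt_after (- y) (- x1) ltac:(lra)).
  rewrite ell_pairing_opp in *. lra.
Qed.

Lemma ell_cross_sign x y : ell_pairing a b x y = c -> 0 < sin (y - x) * ell_cross a b x y.
Proof.
  intros Hroot.
  set (m := a * cos x ^ 2 + b * sin x ^ 2). set (E := (b - a) * sin x * cos x).
  set (w := ell_cross a b x y). set (r2 := ell_norm2 a b x).
  assert (Hm : 0 < m) by exact (ell_weight_pos a b Ha Hb x).
  assert (Hmc : c < m) by now apply lt_cos2_sin2_comb.
  assert (Hr2c : c ^ 2 < r2).
  { unfold r2. rewrite <- ell_norm_sq. pose proof (ell_norm_gt x). nra. }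
  assert (Hr2 : r2 = m ^ 2 + E ^ 2).
  { unfold r2, m, E, ell_norm2. rewrite <- (Rmult_1_r (a ^ 2 * _ + _)), <- (cos2_sin2 x). ring. }
  assert (Hw : w ^ 2 = r2 - c ^ 2) by (unfold w, r2; now rewrite ell_cross_sq, Hroot).
  assert (Hsin : sin (y - x) * r2 = c * E + w * m).
  { rewrite sin_minus. unfold r2.
    transitivity (sin y * ell_norm2 a b x * cos x - cos y * ell_norm2 a b x * sin x); [ring|].
    rewrite sin_ell_frame, cos_ell_frame, Hroot. unfold w, E, m. ring. }
  assert (Hdom : (c * E * w) ^ 2 < (w ^ 2 * m) ^ 2).
  { assert (Hdiff : w ^ 2 * m ^ 2 - c ^ 2 * E ^ 2 = r2 * (m ^ 2 - c ^ 2))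
      by (rewrite Hw, Hr2; ring).
    assert (0 < w ^ 2) by lra. assert (0 < r2 * (m ^ 2 - c ^ 2)) by (apply Rmult_lt_0_compat; nra).
    assert (0 < w ^ 2 * (w ^ 2 * m ^ 2 - c ^ 2 * E ^ 2)) by (apply Rmult_lt_0_compat; lra).
    nra. }
  assert (Hpos : 0 < w ^ 2 * m + c * E * w).
  { assert (0 < w ^ 2 * m) by (apply Rmult_lt_0_compat; lra).
    generalize dependent (w ^ 2 * m). generalize (c * E * w). intros B A HB HA. nra. }
  replace (w ^ 2 * m + c * E * w) with (sin (y - x) * w * r2) in Hpos
    by (rewrite (Rmult_comm _ w), Rmult_assoc, Hsin; ring).
  nra.
Qed.

Lemma same_dir_of_ell_pairing x y :
  ell_pairing a b x y = c -> 0 < sin (y - x) -> same_dir y (next_root a b c x).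
Proof.
  intros Hroot Hsin.
  pose proof (next_root_bounds x). pose proof (ell_pairing_next_root x) as Hz.
  set (z := next_root a b c x) in *.
  assert (Hsinz : 0 < sin (z - x)) by (apply sin_gt_0; lra).
  pose proof (ell_cross_sign x y Hroot). pose proof (ell_cross_sign x z Hz).
  assert (Hsq : ell_cross a b x y ^ 2 = ell_cross a b x z ^ 2)
    by now rewrite !ell_cross_sq, Hroot, Hz.
  assert (0 < ell_cross a b x y) by nra. assert (0 < ell_cross a b x z) by nra.
  assert (Hcross : ell_cross a b x y = ell_cross a b x z).
  { apply Rsqr_inj; [lra|lra|]. unfold Rsqr. nra. }
  pose proof (ell_norm2_pos a b Ha Hb x).
  split; apply (Rmult_eq_reg_r (ell_norm2 a b x)); try lra.
  - now rewrite !cos_ell_frame, Hroot, Hz, Hcross.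
  - now rewrite !sin_ell_frame, Hroot, Hz, Hcross.
Qed.

Lemma next_root_same_dir x x' :
  same_dir x x' -> same_dir (next_root a b c x) (next_root a b c x').
Proof.
  intros [Hcos Hsin]. apply same_dir_of_ell_pairing.
  - unfold ell_pairing. rewrite <- Hcos, <- Hsin. apply ell_pairing_next_root.
  - rewrite sin_minus, <- Hcos, <- Hsin, <- sin_minus.
    pose proof (next_root_bounds x). apply sin_gt_0; lra.
Qed.

(* Of the two tangents through a point, the one met first when turning counterclockwise
   has its contact point behind the point, the other one ahead of it. *)
Lemma ell_pairing_roots_orientation s y1 y2 : 0 < c ->
  ell_pairing a b s y1 = c -> ell_pairing a b s y2 = c -> 0 < sin (y2 - y1) ->
  sin (y1 - s) < 0 < sin (y2 - s).
Proof.
  intros Hc0 Hroot1 Hroot2 Hsin.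
  pose proof (ell_cross_sign s y1 Hroot1). pose proof (ell_cross_sign s y2 Hroot2).
  set (w1 := ell_cross a b s y1) in *. set (w2 := ell_cross a b s y2) in *.
  set (r2 := ell_norm2 a b s).
  assert (Hr2 : 0 < r2) by now apply ell_norm2_pos.
  assert (Hdiff : sin (y2 - y1) * r2 * r2 = c * (w2 - w1) * r2).
  { rewrite sin_minus.
    transitivity ((sin y2 * r2) * (cos y1 * r2) - (cos y2 * r2) * (sin y1 * r2)); [ring|].
    unfold r2. rewrite !sin_ell_frame, !cos_ell_frame, Hroot1, Hroot2.
    fold w1 w2. unfold ell_norm2. ring. }
  assert (Hlt : w1 < w2).
  { assert (0 < c * (w2 - w1) * r2) by (rewrite <- Hdiff; apply Rmult_lt_0_compat; nra).
    assert (0 < c * (w2 - w1)) by nra. nra. }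
  assert (Hsq : w1 ^ 2 = w2 ^ 2) by (unfold w1, w2; now rewrite !ell_cross_sq, Hroot1, Hroot2).
  assert (w1 < 0 < w2) by nra.
  split; nra.
Qed.

End NextRoot.

Lemma same_dir_add_2pi_mult x n : same_dir (x + 2 * INR n * PI) x.
Proof. split; [apply cos_period|apply sin_period]. Qed.

Lemma same_dir_lift x y : same_dir x y -> y <= x -> exists w : nat, x = y + 2 * INR w * PI.
Proof.
  intros [Hcos Hsin] Hle. pose proof PI_RGT_0.
  assert (Hcos1 : cos (2 * ((x - y) / 2)) = 1).
  { replace (2 * ((x - y) / 2)) with (x - y) by field.
    rewrite cos_minus, Hcos, Hsin. pose proof (cos2_sin2 y). lra. }
  rewrite cos_2a_sin in Hcos1.
  destruct (sin_eq_0_0 ((x - y) / 2)) as [k Hk]; [nra|].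
  assert (Hk0 : (0 <= k)%Z).
  { apply le_IZR. apply (Rmult_le_reg_r PI); lra. }
  exists (Z.to_nat k). rewrite INR_IZR_INZ, Z2Nat.id by assumption. lra.
Qed.

Lemma incr_square_root_translation (G : R -> R) (s a : R) :
  (forall x y, x < y -> G x < G y) -> G (a + s) = G a + s ->
  G (G a) = a + 2 * s -> G a = a + s.
Proof.
  intros HG Hs Hsq.
  destruct (Rtotal_order (G a) (a + s)) as [Hlt|[Heq|Hgt]]; [|assumption|].
  - pose proof (HG _ _ Hlt). lra.
  - pose proof (HG _ _ Hgt). lra.
Qed.

Lemma incr_square_root_half_turn (G g : R -> R) (s a : R) :
  (forall x y, x < y -> G x < G y) -> (forall x y, x < y -> g x < g y) ->
  (forall x, G (x + s) = G x + s) -> (forall x, g (x + s) = g x + s) ->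
  (forall x, g (g x) = x + PI) -> (forall x, G (g x) = g (G x)) ->
  G (G a) = a + 2 * s + PI -> G a = g a + s.
Proof.
  intros HG Hg HGs Hgs Hgg HGg Hsq.
  set (b := G a - s).
  assert (HGb : G b = a + s + PI).
  { pose proof (HGs b). replace (b + s) with (G a) in * by (unfold b; ring). lra. }
  assert (Hgb : G (g a) = g b + s).
  { rewrite HGg, <- Hgs. f_equal. unfold b. ring. }
  pose proof (Hgg a).
  destruct (Rtotal_order b (g a)) as [Hlt|[Heq|Hgt]].
  - pose proof (HG _ _ Hlt). pose proof (Hg _ _ Hlt). lra.
  - unfold b in Heq. lra.
  - pose proof (HG _ _ Hgt). pose proof (Hg _ _ Hgt). lra.
Qed.

Section LiftedCircleMaps.

Variables f g : R -> R.
Hypothesis f_incr : forall x y, x < y -> f x < f y.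
Hypothesis f_add_pi : forall x, f (x + PI) = f x + PI.
Hypothesis f_gt : forall x, x < f x.
Hypothesis g_incr : forall x y, x < y -> g x < g y.
Hypothesis g_add_pi : forall x, g (x + PI) = g x + PI.
Hypothesis g_g : forall x, g (g x) = x + PI.
Hypothesis f_g_comm : forall x, f (g x) = g (f x).

Let add_pi_mult (h : R -> R) (Hh : forall x, h (x + PI) = h x + PI) m x :
  h (x + INR m * PI) = h x + INR m * PI.
Proof.
  induction m as [|m IH].
  - simpl. now rewrite !Rmult_0_l, !Rplus_0_r.
  - rewrite S_INR. replace (x + (INR m + 1) * PI) with (x + INR m * PI + PI) by ring.
    rewrite Hh, IH. ring.
Qed.

Lemma iter_increasing n x y : x < y -> Nat.iter n f x < Nat.iter n f y.
Proof. intros Hxy. induction n as [|n IH]; simpl; auto. Qed.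

Lemma iter_add_pi_mult n m x :
  Nat.iter n f (x + INR m * PI) = Nat.iter n f x + INR m * PI.
Proof.
  symmetry. apply (Nat.iter_swap_gen _ _ (fun y => y + INR m * PI)).
  intros y. symmetry. now apply add_pi_mult.
Qed.

Lemma iter_ge n x : x <= Nat.iter n f x.
Proof.
  induction n as [|n IH]; simpl; [lra|].
  pose proof (f_gt (Nat.iter n f x)). lra.
Qed.

Lemma iter_comm n x : Nat.iter n f (g x) = g (Nat.iter n f x).
Proof. symmetry. now apply Nat.iter_swap_gen. Qed.

(* The rotation number argument: a lift returning to its starting direction after
   [4 H] steps advances by [2 w PI] and, by monotonicity, by [w PI] after [2 H] steps; [w]
   is odd unless [2 H] is already a period, and [H] steps then realize the half turn [g]. *)
Lemma iter_half_period u0 H :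
  same_dir (Nat.iter (4 * H) f u0) u0 ->
  (exists j, ~ same_dir (Nat.iter (j + 2 * H) f u0) (Nat.iter j f u0)) ->
  exists m : nat, forall j, Nat.iter (j + H) f u0 = g (Nat.iter j f u0) + INR m * PI.
Proof.
  intros Hper [j0 Hj0].
  destruct (same_dir_lift _ _ Hper (iter_ge _ _)) as [w Hw].
  assert (Hturn : forall j, Nat.iter (2 * H) f (Nat.iter j f u0)
                            = Nat.iter j f u0 + INR w * PI).
  { intros j. apply incr_square_root_translation.
    - intros x y. apply iter_increasing.
    - apply iter_add_pi_mult.
    - transitivity (Nat.iter j f (Nat.iter (4 * H) f u0)).
      { rewrite <- !Nat.iter_add. f_equal. lia. }
      rewrite Hw.
      replace (2 * INR w * PI) with (INR (2 * w) * PI) by (rewrite mult_INR; simpl; ring).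
      rewrite iter_add_pi_mult, mult_INR. simpl. ring. }
  destruct (Nat.Even_or_Odd w) as [[m Hm]|[m Hm]].
  - exfalso. apply Hj0. rewrite Nat.add_comm, Nat.iter_add, Hturn, Hm, mult_INR.
    replace (INR 2 * INR m * PI) with (2 * INR m * PI) by (simpl; ring).
    apply same_dir_add_2pi_mult.
  - exists m. intros j. rewrite Nat.add_comm, Nat.iter_add.
    apply incr_square_root_half_turn.
    + intros x y. apply iter_increasing.
    + exact g_incr.
    + intros x. apply iter_add_pi_mult.
    + intros x. now apply add_pi_mult.
    + exact g_g.
    + intros x. apply iter_comm.
    + rewrite <- Nat.iter_add. replace (H + H)%nat with (2 * H)%nat by lia.
      rewrite Hturn, Hm, plus_INR, mult_INR. simpl. ring.
Qed.

End LiftedCircleMaps.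

Lemma on_tangent_ell_pt ac bc ae be s x : 0 < ac -> 0 < bc ->
  on_tangent ac bc s (ell_pt ae be x) -> ell_pairing (ae / ac) (be / bc) x s = 1.
Proof.
  unfold on_tangent, ell_pt, ell_pairing. simpl. intros Hac Hbc <-. field. lra.
Qed.

Lemma cross_ell_pt a b x y : cross (ell_pt a b x) (ell_pt a b y) = a * b * sin (y - x).
Proof. unfold cross, ell_pt. simpl. rewrite sin_minus. ring. Qed.

Lemma ell_pt_eq_iff a b x y : 0 < a -> 0 < b ->
  ell_pt a b x = ell_pt a b y <-> same_dir x y.
Proof.
  intros Ha Hb. unfold ell_pt. split.
  - intros Heq. injection Heq as Hc Hs. split.
    + apply (Rmult_eq_reg_l a); lra.
    + apply (Rmult_eq_reg_l b); lra.
  - now intros [-> ->].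
Qed.

Lemma tc_norm_kh_of_ell_norm2 ac bc x y : 0 <= ac * bc ->
  ell_norm2 bc ac y * ell_norm2 bc ac x = (ac * bc) ^ 2 ->
  tc_norm ac bc x * tc_norm ac bc y = ac * bc /\ sqrt (kh ac bc x * kh ac bc y) = ac * bc.
Proof.
  intros Hpos Hprod.
  assert (Htc : forall s, tc_norm ac bc s = sqrt (ell_norm2 bc ac s))
    by (intros; unfold tc_norm, ell_norm2; f_equal; ring).
  assert (Hkh : forall s, kh ac bc s = - ell_norm2 bc ac s)
    by (intros; unfold kh, ell_norm2; ring).
  split.
  - rewrite !Htc, <- sqrt_mult_alt by apply ell_norm2_nonneg.
    rewrite Rmult_comm, Hprod. now apply sqrt_pow2.
  - rewrite !Hkh, Rmult_opp_opp, Rmult_comm, Hprod. now apply sqrt_pow2.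
Qed.

Definition bounce (ac bc ae be : R) : R -> R := next_root (ae / ac) (be / bc) 1.

(* The polar angle of the tangent vector t_c(x) = (- ac sin x, bc cos x) of the caustic. *)
Definition tangent_angle (ac bc : R) : R -> R := next_root bc ac 0.

Section Confocal.

Variables ac bc ae be k : R.
Hypotheses (Hbc : 0 < bc) (Hac : bc < ac) (Hk : 0 < k) (Hae : 0 < ae) (Hbe : 0 < be)
  (Hae2 : ae ^ 2 = ac ^ 2 + k) (Hbe2 : be ^ 2 = bc ^ 2 + k).

Let Hac0 : 0 < ac. Proof. lra. Qed.

Lemma bounce_params : 1 < ae / ac /\ 1 < be / bc.
Proof.
  split.
  - replace (ae / ac) with (1 + (ae - ac) / ac) by (field; lra).
    assert (0 < (ae - ac) / ac) by (apply Rdiv_lt_0_compat; nra). lra.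
  - replace (be / bc) with (1 + (be - bc) / bc) by (field; lra).
    assert (0 < (be - bc) / bc) by (apply Rdiv_lt_0_compat; nra). lra.
Qed.

Lemma cos_tangent_angle x : cos (tangent_angle ac bc x) = - ac * sin x / ell_norm bc ac x.
Proof.
  unfold tangent_angle, next_root, Rdiv at 1. rewrite Rmult_0_l, acos_0, cos_plus, cos_PI2, sin_PI2.
  rewrite sin_ell_arg by lra. field. apply Rgt_not_eq, ell_norm_pos; lra.
Qed.

Lemma sin_tangent_angle x : sin (tangent_angle ac bc x) = bc * cos x / ell_norm bc ac x.
Proof.
  unfold tangent_angle, next_root, Rdiv at 1. rewrite Rmult_0_l, acos_0, sin_plus, cos_PI2, sin_PI2.
  rewrite cos_ell_arg by lra. field. apply Rgt_not_eq, ell_norm_pos; lra.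
Qed.

Lemma ell_norm2_tangent_angle x :
  ell_norm2 bc ac (tangent_angle ac bc x) * ell_norm2 bc ac x = (ac * bc) ^ 2.
Proof.
  pose proof (ell_norm_pos bc ac Hbc Hac0 x).
  unfold ell_norm2 at 1. rewrite cos_tangent_angle, sin_tangent_angle, <- ell_norm_sq.
  rewrite <- (Rmult_1_r ((ac * bc) ^ 2)), <- (cos2_sin2 x). field. lra.
Qed.

Lemma tangent_angle_involutive x : tangent_angle ac bc (tangent_angle ac bc x) = x + PI.
Proof.
  pose proof (next_root_bounds bc ac 0 (Rle_refl 0) Hbc Hac0 x).
  pose proof (ell_pairing_next_root bc ac 0 (Rle_refl 0) Hbc Hac0 x).
  fold (tangent_angle ac bc x) in *.
  symmetry. apply next_root_unique; try lra.
  rewrite ell_pairing_add_pi_r, ell_pairing_sym. lra.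
Qed.

Lemma tangent_angle_increasing x y : x < y -> tangent_angle ac bc x < tangent_angle ac bc y.
Proof. apply next_root_increasing; lra. Qed.

Lemma tangent_angle_add_pi x : tangent_angle ac bc (x + PI) = tangent_angle ac bc x + PI.
Proof. apply next_root_add_pi. Qed.

(* For a tangency pair (x, y) with [p = cos x cos y] and [q = sin x sin y],
   [ac ae q + bc be p] is ||t_c x|| ||t_c y|| times the pairing of the tangent angles, and
   [p - q = cos (x + y) <= 1]. *)
Lemma tangency_dual_pos p q :
  ae * bc * p + be * ac * q = ac * bc -> p - q <= 1 -> 0 < ac * ae * q + bc * be * p.
Proof.
  intros Htan Hpq.
  assert (Hac_ae : ac < ae) by nra. assert (Hbc_be : bc < be) by nra.
  assert (Hgap : 0 < ac ^ 2 - bc ^ 2) by nra.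
  destruct (Rlt_or_le p 0) as [Hp|Hp]; [|destruct (Rlt_or_le q 0) as [Hq|Hq]].
  - assert (E : (ac * ae * q + bc * be * p) * be = bc * (ae * ac - p * (ac ^ 2 - bc ^ 2))).
    { transitivity (ae * (be * ac * q + ae * bc * p) - bc * p * (ae ^ 2 - be ^ 2)); [ring|].
      replace (be * ac * q + ae * bc * p) with (ac * bc) by lra.
      rewrite Hae2, Hbe2. ring. }
    assert (0 < bc * (ae * ac - p * (ac ^ 2 - bc ^ 2))) by (apply Rmult_lt_0_compat; nra).
    nra.
  - assert (E : (ac * ae * q + bc * be * p) * ae = ac * (be * bc + q * (ac ^ 2 - bc ^ 2))).
    { transitivity (be * (ae * bc * p + be * ac * q) + ac * q * (ae ^ 2 - be ^ 2)); [ring|].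
      replace (ae * bc * p + be * ac * q) with (ac * bc) by lra.
      rewrite Hae2, Hbe2. ring. }
    assert (Hq1 : - q * (be * ac + ae * bc) <= bc * (ae - ac)).
    { assert (ae * bc * (p - q) <= ae * bc * 1)
        by (apply Rmult_le_compat_l; [apply Rlt_le, Rmult_lt_0_compat|]; lra).
      lra. }
    assert (Hchain : (ae - ac) * (ac ^ 2 - bc ^ 2) < be * (be * ac + ae * bc)).
    { assert (Hk' : (ae - ac) * (ae + ac) = k) by nra.
      assert ((ae - ac) * (ac ^ 2 - bc ^ 2) < (ae - ac) * (ac * (ae + ac)))
        by (apply Rmult_lt_compat_l; nra).
      assert (k * ac < be ^ 2 * ac) by (apply Rmult_lt_compat_r; nra).
      assert (0 < be * ae * bc) by (repeat apply Rmult_lt_0_compat; lra).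
      nra. }
    assert (Hsum : 0 < be * ac + ae * bc) by nra.
    assert (- q * (ac ^ 2 - bc ^ 2) * (be * ac + ae * bc) < be * bc * (be * ac + ae * bc)).
    { assert (- q * (be * ac + ae * bc) * (ac ^ 2 - bc ^ 2)
              <= bc * (ae - ac) * (ac ^ 2 - bc ^ 2)) by (apply Rmult_le_compat_r; lra).
      nra. }
    assert (0 < be * bc + q * (ac ^ 2 - bc ^ 2)).
    { apply (Rmult_lt_reg_r (be * ac + ae * bc)); nra. }
    assert (0 < ac * (be * bc + q * (ac ^ 2 - bc ^ 2))) by (apply Rmult_lt_0_compat; lra).
    nra.
  - assert (0 <= ac * ae * q) by (apply Rmult_le_pos; nra).
    destruct (Rle_lt_or_eq_dec 0 p Hp) as [Hp0|<-].
    + assert (0 < bc * be * p) by (repeat apply Rmult_lt_0_compat; lra). lra.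
    + assert (0 < be * ac * q) by nra.
      assert (0 < q) by (apply (Rmult_lt_reg_l (be * ac)); nra).
      assert (0 < ac * ae * q) by (repeat apply Rmult_lt_0_compat; lra). lra.
Qed.

Lemma tangency_dual_sq x y :
  ae * bc * (cos x * cos y) + be * ac * (sin x * sin y) = ac * bc ->
  (ac * ae * (sin x * sin y) + bc * be * (cos x * cos y)) ^ 2
  = ell_norm2 bc ac x * ell_norm2 bc ac y.
Proof.
  intros Htan. set (p := cos x * cos y) in *. set (q := sin x * sin y) in *.
  assert (Hnorm : ell_norm2 bc ac x * ell_norm2 bc ac y
      = bc ^ 4 * p ^ 2 + ac ^ 4 * q ^ 2 + (ac * bc) ^ 2 * (1 - p ^ 2 - q ^ 2)).
  { replace (1 - p ^ 2 - q ^ 2)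
      with ((cos x ^ 2 + sin x ^ 2) * (cos y ^ 2 + sin y ^ 2) - p ^ 2 - q ^ 2)
      by (rewrite !cos2_sin2; ring).
    unfold p, q, ell_norm2. ring. }
  assert (Hsq : (ac * ae * q + bc * be * p) ^ 2
      = (ae * bc * p + be * ac * q) ^ 2 + (ae ^ 2 - be ^ 2) * (ac ^ 2 * q ^ 2 - bc ^ 2 * p ^ 2))
    by ring.
  rewrite Hsq, Htan, Hnorm. replace (ae ^ 2 - be ^ 2) with (ac ^ 2 - bc ^ 2) by lra. ring.
Qed.

Lemma ell_pairing_tangent_angle x y :
  ell_pairing (ae / ac) (be / bc) x y = 1 ->
  ell_pairing (ae / ac) (be / bc) (tangent_angle ac bc x) (tangent_angle ac bc y) = 1.
Proof.
  intros Hxy.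
  pose proof (ell_norm_pos bc ac Hbc Hac0 x) as Hrx.
  pose proof (ell_norm_pos bc ac Hbc Hac0 y) as Hry.
  assert (Htan : ae * bc * (cos x * cos y) + be * ac * (sin x * sin y) = ac * bc).
  { rewrite <- (Rmult_1_r (ac * bc)), <- Hxy. unfold ell_pairing. field. lra. }
  assert (Hpos : 0 < ac * ae * (sin x * sin y) + bc * be * (cos x * cos y)).
  { apply tangency_dual_pos; [assumption|]. rewrite <- cos_plus. apply COS_bound. }
  assert (Hprod : ac * ae * (sin x * sin y) + bc * be * (cos x * cos y)
                  = ell_norm bc ac x * ell_norm bc ac y).
  { apply Rsqr_inj; [lra|nra|]. rewrite !Rsqr_pow2, tangency_dual_sq by assumption.
    rewrite <- !ell_norm_sq. ring. }
  unfold ell_pairing. rewrite !cos_tangent_angle, !sin_tangent_angle.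
  transitivity ((ac * ae * (sin x * sin y) + bc * be * (cos x * cos y))
                / (ell_norm bc ac x * ell_norm bc ac y)).
  - field. lra.
  - rewrite Hprod. field. lra.
Qed.

Lemma bounce_tangent_angle_comm x :
  bounce ac bc ae be (tangent_angle ac bc x) = tangent_angle ac bc (bounce ac bc ae be x).
Proof.
  destruct bounce_params as [HA HB].
  pose proof (next_root_bounds _ _ 1 Rle_0_1 HA HB x) as Hx. fold (bounce ac bc ae be x) in Hx.
  symmetry. apply next_root_unique; [lra|lra|lra| |].
  - split.
    + apply Rlt_le, tangent_angle_increasing. lra.
    + rewrite <- tangent_angle_add_pi. apply Rlt_le, tangent_angle_increasing. lra.
  - apply ell_pairing_tangent_angle, ell_pairing_next_root; lra.
Qed.

Lemma billiard_step N t t' i : periodic_billiard ac bc ae be N t t' ->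
  same_dir (t' i) (bounce ac bc ae be (t i)) /\
  same_dir (t (S i)) (bounce ac bc ae be (t' i)).
Proof.
  intros Hbil. destruct Hbil as (_ & Htan & _ & Hccw & _). destruct bounce_params as [HA HB].
  destruct (Htan i) as [Hfrom Hto].
  apply on_tangent_ell_pt in Hfrom; [|lra|lra]. apply on_tangent_ell_pt in Hto; [|lra|lra].
  rewrite ell_pairing_sym in Hfrom, Hto.
  assert (Hturn : 0 < sin (t (S i) - t i)).
  { specialize (Hccw i). simpl in Hccw. rewrite cross_ell_pt in Hccw.
    assert (0 < ae * be) by nra. nra. }
  destruct (ell_pairing_roots_orientation _ _ 1 Rle_0_1 HA HB (t' i) (t i) (t (S i)) ltac:(lra)
              Hfrom Hto Hturn) as [Hbehind Hahead].
  split; apply same_dir_of_ell_pairing; try lra.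
  - now rewrite ell_pairing_sym.
  - replace (t' i - t i) with (- (t i - t' i)) by ring. rewrite sin_neg. lra.
Qed.

Lemma billiard_orbit N t t' : periodic_billiard ac bc ae be N t t' -> forall i,
  same_dir (Nat.iter (2 * i) (bounce ac bc ae be) (t 0%nat)) (t i) /\
  same_dir (Nat.iter (S (2 * i)) (bounce ac bc ae be) (t 0%nat)) (t' i).
Proof.
  intros Hbil. destruct bounce_params as [HA HB].
  assert (Hnext : forall x y, same_dir x y ->
            same_dir (bounce ac bc ae be x) (bounce ac bc ae be y))
    by (intros x y Hxy; apply next_root_same_dir; lra || exact Hxy).
  induction i as [|i [Heven Hodd]].
  - destruct (billiard_step N t t' 0 Hbil) as [Hstep _].
    split; [split; reflexivity|]. now apply same_dir_sym.
  - destruct (billiard_step N t t' i Hbil) as [_ Hstep].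
    destruct (billiard_step N t t' (S i) Hbil) as [Hstep' _].
    replace (2 * S i)%nat with (S (S (2 * i))) by lia. simpl Nat.iter.
    assert (Heven' : same_dir (bounce ac bc ae be (Nat.iter (S (2 * i)) (bounce ac bc ae be)
                                 (t 0%nat))) (t (S i)))
      by (eapply same_dir_trans; [apply Hnext, Hodd|now apply same_dir_sym]).
    split; [exact Heven'|].
    eapply same_dir_trans; [apply Hnext, Heven'|now apply same_dir_sym].
Qed.

Lemma billiard_conjugate_norms N t t' H :
  periodic_billiard ac bc ae be N t t' -> N = (2 * H)%nat -> forall j,
  ell_norm2 bc ac (Nat.iter (j + H) (bounce ac bc ae be) (t 0%nat))
  * ell_norm2 bc ac (Nat.iter j (bounce ac bc ae be) (t 0%nat)) = (ac * bc) ^ 2.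
Proof.
  intros Hbil HN. destruct bounce_params as [HA HB].
  pose proof (billiard_orbit N t t' Hbil) as Horb.
  destruct Hbil as (_ & _ & _ & _ & HNpos & Hper & Hmin).
  destruct (iter_half_period (bounce ac bc ae be) (tangent_angle ac bc)) with (t 0%nat) H
    as [m Hm].
  - intros x y. apply next_root_increasing; lra.
  - apply next_root_add_pi.
  - intros x. apply (next_root_bounds _ _ 1); lra.
  - apply tangent_angle_increasing.
  - apply tangent_angle_add_pi.
  - apply tangent_angle_involutive.
  - apply bounce_tangent_angle_comm.
  - replace (4 * H)%nat with (2 * N)%nat by lia.
    eapply same_dir_trans; [apply (Horb N)|].
    apply (ell_pt_eq_iff ae be); [lra|lra|]. apply (Hper 0%nat).
  - destruct (Hmin H ltac:(lia)) as [i Hi]. exists (2 * i)%nat. intros Hsame.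
    apply Hi, ell_pt_eq_iff; [lra|lra|].
    destruct (Horb i) as [Hti _]. destruct (Horb (i + H)%nat) as [HtiH _].
    replace (2 * (i + H))%nat with (2 * i + 2 * H)%nat in HtiH by lia.
    eapply same_dir_trans; [apply same_dir_sym, HtiH|].
    eapply same_dir_trans; [apply Hsame|exact Hti].
  - intros j. rewrite Hm, ell_norm2_add_pi_mult. apply ell_norm2_tangent_angle.
Qed.

Lemma billiard_tc_norm_product N t t' H j x y :
  periodic_billiard ac bc ae be N t t' -> N = (2 * H)%nat ->
  same_dir (Nat.iter j (bounce ac bc ae be) (t 0%nat)) x ->
  same_dir (Nat.iter (j + H) (bounce ac bc ae be) (t 0%nat)) y ->
  tc_norm ac bc x * tc_norm ac bc y = ac * bc /\ sqrt (kh ac bc x * kh ac bc y) = ac * bc.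
Proof.
  intros Hbil HN Hx Hy.
  apply tc_norm_kh_of_ell_norm2; [nra|].
  rewrite <- (ell_norm2_same_dir _ _ _ _ Hx), <- (ell_norm2_same_dir _ _ _ _ Hy).
  exact (billiard_conjugate_norms N t t' H Hbil HN j).
Qed.

End Confocal.

Theorem lemma2 (ac bc ae be k : R) (N : nat) (t t' : nat -> R) :
  0 < bc -> bc < ac -> 0 < k -> 0 < ae -> 0 < be ->
  ae ^ 2 = ac ^ 2 + k -> be ^ 2 = bc ^ 2 + k ->
  periodic_billiard ac bc ae be N t t' ->
  forall n i : nat,
    ((N = 4 * n)%nat ->
       tc_norm ac bc (t i) * tc_norm ac bc (t (i + n)%nat) = ac * bc /\
       sqrt (kh ac bc (t i) * kh ac bc (t (i + n)%nat)) = ac * bc /\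
       tc_norm ac bc (t' i) * tc_norm ac bc (t' (i + n)%nat) = ac * bc /\
       sqrt (kh ac bc (t' i) * kh ac bc (t' (i + n)%nat)) = ac * bc) /\
    ((N = 4 * n + 2)%nat ->
       tc_norm ac bc (t i) * tc_norm ac bc (t' (i + n)%nat) = ac * bc /\
       sqrt (kh ac bc (t i) * kh ac bc (t' (i + n)%nat)) = ac * bc /\
       tc_norm ac bc (t' i) * tc_norm ac bc (t (i + n + 1)%nat) = ac * bc /\
       sqrt (kh ac bc (t' i) * kh ac bc (t (i + n + 1)%nat)) = ac * bc).
Proof.
  intros Hbc Hac Hk Hae Hbe Hae2 Hbe2 Hbil n i.
  pose proof (billiard_orbit ac bc ae be k Hbc Hac Hk Hae Hbe Hae2 Hbe2 N t t' Hbil) as Horb.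
  pose proof (billiard_tc_norm_product ac bc ae be k Hbc Hac Hk Hae Hbe Hae2 Hbe2 N t t')
    as Hprod.
  destruct (Horb i) as [Hti Ht'i].
  split; intros HN.
  - destruct (Horb (i + n)%nat) as [Htin Ht'in].
    replace (2 * (i + n))%nat with (2 * i + 2 * n)%nat in Htin, Ht'in by lia.
    destruct (Hprod (2 * n)%nat (2 * i)%nat _ _ Hbil ltac:(lia) Hti Htin).
    destruct (Hprod (2 * n)%nat (S (2 * i)) _ _ Hbil ltac:(lia) Ht'i Ht'in).
    tauto.
  - destruct (Horb (i + n)%nat) as [_ Ht'in]. destruct (Horb (i + n + 1)%nat) as [Htin1 _].
    replace (S (2 * (i + n))) with (2 * i + (2 * n + 1))%nat in Ht'in by lia.
    replace (2 * (i + n + 1))%nat with (S (2 * i) + (2 * n + 1))%nat in Htin1 by lia.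
    destruct (Hprod (2 * n + 1)%nat (2 * i)%nat _ _ Hbil ltac:(lia) Hti Ht'in).
    destruct (Hprod (2 * n + 1)%nat (S (2 * i)) _ _ Hbil ltac:(lia) Ht'i Htin1).
    tauto.
Qed.
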